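(* Let $\Phi=(A;A^*;\{E_i\}_{i=0}^d;\{E^*_i\}_{i=0}^d)$ be a Leonard system in $\mathcal A$ with eigenvalue sequence $\theta_0,\dots,\theta_d$, and let $p_i$, $x_i$, $m_i$ be as defined below. Then $$\sum_{r=0}^d p_i(\theta_r)p_j(\theta_r)m_r=\delta_{ij}\,x_1x_2\cdots x_i\qquad(0\le i,j\le d),$$ $$\sum_{i=0}^d\frac{p_i(\theta_r)p_i(\theta_s)}{x_1x_2\cdots x_i}=\delta_{rs}\,m_r^{-1}\qquad(0\le r,s\le d).$$
   Context: Let $\mathbb K$ be a field, $d\ge 0$ an integer, and $\mathcal A$ a $\mathbb K$-algebra isomorphic to the full matrix algebra $\mathrm{Mat}_{d+1}(\mathbb K)$; $I$ is its identity. An element of $\mathcal A$ is multiplicity-free if it has $d+1$ mutually distinct eigenvalues in $\mathbb K$. If $A$ is multiplicity-free with eigenvalues $\theta_0,\dots,\theta_d$, the primitive idempotent of $A$ associated with $\theta_i$ is $E_i=\prod_{j\ne i}(A-\theta_jI)/(\theta_i-\theta_j)$. A Leonard system in $\mathcal A$ is a sequence $\Phi=(A;A^*;\{E_i\}_{i=0}^d;\{E^*_i\}_{i=0}^d)$ such that (i) $A,A^*\in\mathcal A$ are multiplicity-free; (ii) $E_0,\dots,E_d$ is an ordering of the primitive idempotents of $A$; (iii) $E^*_0,\dots,E^*_d$ is an ordering of the primitive idempotents of $A^*$; (iv) $E_iA^*E_j=0$ if $|i-j|>1$ and $E_iA^*E_j\ne0$ if $|i-j|=1$ ($0\le i,j\le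 d$); (v) $E^*_iAE^*_j=0$ if $|i-j|>1$ and $E^*_iAE^*_j\ne0$ if $|i-j|=1$ ($0\le i,j\le d$). Here $A^*$ is merely notation (not an adjoint). $\theta_i$ is the eigenvalue of $A$ associated with $E_i$. Define $a_i=\mathrm{tr}(E^*_iA)$ ($0\le i\le d$), $x_i=\mathrm{tr}(E^*_iAE^*_{i-1}A)$ ($1\le i\le d$), $x_0=0$; polynomials $p_{-1}=0$, $p_0=1$, $\lambda p_i=p_{i+1}+a_ip_i+x_ip_{i-1}$ ($0\le i\le d$); and $m_i=\mathrm{tr}(E_iE^*_0)$ ($0\le i\le d$). Empty products equal $1$. *)

From HB Require Import structures.
From mathcomp Require Import all_boot all_order all_algebra.
Set Implicit Arguments. Unset Strict Implicit. Unset Printing Implicit Defensive.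
Import GRing.Theory.
Local Open Scope ring_scope.

Section LS.
Variables (K : fieldType) (d : nat).
Local Notation M := 'M[K]_d.+1.

Definition mult_free (A : M) : Prop :=
  exists th : 'I_d.+1 -> K, injective th /\ forall i, eigenvalue A (th i).

Definition prim_idem (A : M) (th : 'I_d.+1 -> K) (i : 'I_d.+1) : M :=
  \prod_(j < d.+1 | j != i) ((th i - th j)^-1 *: (A - (th j)%:M)).

Definition idem_ordering (A : M) (E : 'I_d.+1 -> M) : Prop :=
  exists th : 'I_d.+1 -> K, [/\ injective th, forall i, eigenvalue A (th i)
                           & forall i, E i = prim_idem A th i].

Definition far (i j : 'I_d.+1) : bool := (i.+1 < j)%N || (j.+1 < i)%N.
Definition adj (i j : 'I_d.+1) : bool := (i.+1 == j :> nat) || (j.+1 == i :> nat).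

Definition leonard_system (A As : M) (E Es : 'I_d.+1 -> M) : Prop :=
  (mult_free A /\ mult_free As /\ idem_ordering A E /\ idem_ordering As Es /\
  (forall i j, far i j -> E i *m As *m E j = 0) /\
  (forall i j, adj i j -> E i *m As *m E j != 0) /\
  (forall i j, far i j -> Es i *m A *m Es j = 0) /\
  (forall i j, adj i j -> Es i *m A *m Es j != 0))%type.

Definition ls_a (A : M) (Es : 'I_d.+1 -> M) (i : nat) : K :=
  \tr (Es (inord i) *m A).

Definition ls_x (A : M) (Es : 'I_d.+1 -> M) (i : nat) : K :=
  if i is k.+1 then \tr (Es (inord i) *m A *m Es (inord k) *m A) else 0.

(* ls_ppair n = (p_{n-1}, p_n), with p_{-1} = 0, p_0 = 1,
   p_{i+1} = (X - a_i) p_i - x_i p_{i-1}. *)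
Fixpoint ls_ppair (A : M) (Es : 'I_d.+1 -> M) (n : nat) : {poly K} * {poly K} :=
  match n with
  | 0 => (0, 1)
  | k.+1 => let qr := ls_ppair A Es k in
            (qr.2, ('X - (ls_a A Es k)%:P) * qr.2 - (ls_x A Es k)%:P * qr.1)
  end.

Definition ls_p (A : M) (Es : 'I_d.+1 -> M) (n : nat) : {poly K} :=
  (ls_ppair A Es n).2.

Definition ls_m (E Es : 'I_d.+1 -> M) (i : 'I_d.+1) : K :=
  \tr (E i *m Es ord0).

End LS.

(* Write E*_k for the primitive idempotents of A*: orthogonal rank-one
   idempotents summing to I, on which A acts tridiagonally, so that
   A E*_k = E*_{k+1} A E*_k + E*_k A E*_k + E*_{k-1} A E*_k.  Comparing this
   with the three-term recurrence gives p_k(A) E*_0 = E*_k A E*_{k-1} ... A E*_0,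
   and by transposition E*_0 p_k(A) = E*_0 A E*_1 ... A E*_k.  Hence
   tr(p_i(A) p_j(A) E*_0) vanishes for i <> j by orthogonality, while for i = j
   the rank-one identity E X E = tr(E X) E collapses it to x_1 ... x_i.
   Expanding p(A) = sum_r p(th_r) E_r turns this trace into the first sum.
   The first identity says that the matrices [p_i(th_r) m_r] and
   [p_j(th_r) / (x_1 ... x_j)] are mutually inverse, so they also commute,
   which is the second identity. *)

From HB Require Import structures.
From mathcomp Require Import all_boot all_order all_algebra.
From mathcomp Require Import zify.
Set Implicit Arguments. Unset Strict Implicit. Unset Printing Implicit Defensive.
Import GRing.Theory.
Local Open Scope ring_scope.

Lemma mulmx_horner_eigen (R : comNzRingType) n m (A : 'M[R]_n.+1)
    (V : 'M[R]_(m, n.+1)) a p :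
  V *m A = a *: V -> V *m horner_mx A p = p.[a] *: V.
Proof.
move=> VA; elim/poly_ind: p => [|p c IHp].
  by rewrite rmorph0 mulmx0 horner0 scale0r.
rewrite rmorphD rmorphM /= horner_mx_X horner_mx_C -mulmxE mulmxDr mulmxA.
by rewrite IHp -scalemxAl VA scalerA mul_mx_scalar hornerMXaddC scalerDl.
Qed.

Section PrimitiveIdempotents.
Variables (K : fieldType) (d : nat) (A : 'M[K]_d.+1) (th : 'I_d.+1 -> K).
Hypotheses (th_inj : injective th) (th_eigen : forall i, eigenvalue A (th i)).
Local Notation E := (prim_idem A th).

Definition lagrange_poly i : {poly K} :=
  \prod_(j < d.+1 | j != i) ((th i - th j)^-1 *: ('X - (th j)%:P)).

Lemma horner_mx_lagrange i : horner_mx A (lagrange_poly i) = E i.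
Proof.
rewrite /lagrange_poly /prim_idem (big_morph (horner_mx A) (rmorphM _) (rmorph1 _)).
by apply: eq_bigr => j _; rewrite horner_mxZ rmorphB /= horner_mx_X horner_mx_C.
Qed.

Lemma lagrange_poly_th i k : (lagrange_poly i).[th k] = (i == k)%:R.
Proof.
rewrite horner_prod; have [<-|ik] := eqVneq i k.
  apply: big1 => j ji; rewrite hornerZ hornerXsubC mulVf // subr_eq0.
  by apply: contra ji => /eqP/th_inj ->.
by rewrite (bigD1 k) 1?eq_sym //= hornerZ hornerXsubC subrr mulr0 mul0r.
Qed.

Lemma size_lagrange_poly i : (size (lagrange_poly i) <= d.+1)%N.
Proof.
rewrite /lagrange_poly scaler_prod (leq_trans (size_scale_leq _ _)) //.
by rewrite -big_enum size_prod_XsubC -cardE cardC1 card_ord.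
Qed.

Lemma sum_lagrange_poly : \sum_i lagrange_poly i = 1.
Proof.
apply/eqP; rewrite -subr_eq0; apply/eqP/(@roots_geq_poly_eq0 _ _ (map th (enum 'I_d.+1))).
- apply/allP => _ /mapP [k _ ->]; rewrite /root hornerD hornerN hornerC horner_sum.
  rewrite (bigD1 k) //= lagrange_poly_th eqxx big1 ?addr0 ?subrr // => j jk.
  by rewrite lagrange_poly_th (negbTE jk).
- by rewrite map_inj_uniq ?enum_uniq.
rewrite size_map size_enum_ord (leq_trans (size_polyD _ _)) // geq_max size_polyN.
rewrite size_poly1 andbT (leq_trans (size_sum _ _ _)) //.
by apply/bigmax_leqP => i _; apply: size_lagrange_poly.
Qed.

Lemma char_poly_eigenvalues : char_poly A = \prod_i ('X - (th i)%:P).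
Proof.
have ths : size (map th (enum 'I_d.+1)) = d.+1 by rewrite size_map size_enum_ord.
rewrite {1}(@all_roots_prod_XsubC _ (char_poly A) (map th (enum 'I_d.+1))).
- by rewrite (monicP (char_poly_monic A)) scale1r big_map big_enum.
- by rewrite size_char_poly ths.
- by apply/allP => _ /mapP [i _ ->]; rewrite -eigenvalue_root_char.
by rewrite uniq_rootsE map_inj_uniq ?enum_uniq.
Qed.

Lemma mul_prim_idem_A i : E i *m A = th i *: E i.
Proof.
have XsubC_lagrange : ('X - (th i)%:P) * lagrange_poly i =
    (\prod_(j < d.+1 | j != i) (th i - th j)^-1) *: char_poly A.
  rewrite char_poly_eigenvalues /lagrange_poly scaler_prod -scalerAr.
  by congr (_ *: _); rewrite [RHS](bigD1 i).
have := congr1 (horner_mx A) XsubC_lagrange.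
rewrite horner_mxZ Cayley_Hamilton scaler0 rmorphM /= rmorphB /=.
rewrite horner_mx_X horner_mx_C horner_mx_lagrange -mulmxE mulmxBl mul_scalar_mx.
move/eqP; rewrite subr_eq0 => /eqP <-.
by rewrite -horner_mx_lagrange; apply: comm_horner_mx.
Qed.

Lemma horner_mx_mul_prim_idem p i : horner_mx A p *m E i = p.[th i] *: E i.
Proof.
rewrite -(mulmx_horner_eigen p (mul_prim_idem_A i)) -!horner_mx_lagrange.
exact: comm_horner_mx2.
Qed.

Lemma mul_prim_idem i j : E i *m E j = (i == j)%:R *: E j.
Proof. by rewrite -{1}horner_mx_lagrange horner_mx_mul_prim_idem lagrange_poly_th. Qed.

Lemma sum_prim_idem : \sum_i E i = 1.
Proof.
under eq_bigr do rewrite -horner_mx_lagrange.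
by rewrite -(big_morph _ (rmorphD _) (rmorph0 _)) sum_lagrange_poly rmorph1.
Qed.

Lemma horner_mx_prim_idem p : horner_mx A p = \sum_i p.[th i] *: E i.
Proof.
rewrite -[LHS]mulr1 -sum_prim_idem -mulmxE mulmx_sumr.
by apply: eq_bigr => i _; apply: horner_mx_mul_prim_idem.
Qed.

Lemma rank_prim_idem i : \rank (E i) = 1%N.
Proof.
have E_neq0 : E i != 0.
  have /eigenvalueP [v vA v0] := th_eigen i; apply: contraNneq v0 => Ei0.
  have := mulmx_horner_eigen (lagrange_poly i) vA.
  by rewrite horner_mx_lagrange Ei0 mulmx0 lagrange_poly_th eqxx scale1r => <-.
have rank_eigen_le1 : (\rank (eigenspace A (th i)) <= 1)%N.
  have sum_rank : (\sum_j \rank (eigenspace A (th j)) <= d.+1)%N.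
    have /mxdirectP /= <- := mxdirect_sum_eigenspace A (P := predT) (in2W th_inj).
    exact: rank_leq_col.
  have rank_others : (d <= \sum_(j | j != i) \rank (eigenspace A (th j)))%N.
    apply: (@leq_trans #|predC1 i|); first by rewrite cardC1 card_ord.
    by rewrite -sum1_card; apply: leq_sum => j _; rewrite lt0n mxrank_eq0; apply: th_eigen.
  move: sum_rank rank_others; rewrite (bigD1 i) //=.
  move: (\rank _) (\sum_(_ | _) _) => r S; lia.
apply/eqP; rewrite eqn_leq lt0n mxrank_eq0 E_neq0 andbT (leq_trans _ rank_eigen_le1) //.
by apply/mxrankS/eigenspaceP/mul_prim_idem_A.
Qed.

End PrimitiveIdempotents.

Lemma rank1_mulmx_sandwich (K : fieldType) n (E Y : 'M[K]_n) :
  \rank E = 1%N -> E *m Y *m E = \tr (E *m Y) *: E.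
Proof.
move=> rankE; have := mulmx_base E; move: (col_base E) (row_base E).
rewrite rankE => u v <-.
have -> : u *m v *m Y *m (u *m v) = u *m (v *m Y *m u) *m v by rewrite !mulmxA.
rewrite [v *m Y *m u]mx11_scalar mul_mx_scalar -scalemxAl; congr (_ *: _).
by rewrite -[u *m v *m Y]mulmxA mxtrace_mulC /mxtrace big_ord1.
Qed.

Lemma exists_mulmx_neq0 (K : fieldType) n (U V : 'M[K]_n) :
  U != 0 -> V != 0 -> exists Y, U *m Y *m V != 0.
Proof.
move=> /matrix0Pn [a [b Uab]] /matrix0Pn [c [e Vce]]; exists (delta_mx b c).
rewrite -(mul_delta_mx (0 : 'I_1)) mulmxA -colE -mulmxA -rowE.
by apply/matrix0Pn; exists a, e; rewrite mxE big_ord1 !mxE mulf_neq0.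
Qed.

(* Condition (v) of a Leonard system, together with the properties of the
   primitive idempotents E*_i of A* that the argument uses. *)
Definition irred_tridiagonal (K : fieldType) (d : nat) (A : 'M[K]_d.+1)
    (Es : 'I_d.+1 -> 'M[K]_d.+1) : Prop :=
  [/\ forall i j, Es i *m Es j = (i == j)%:R *: Es j,
      forall i, \rank (Es i) = 1%N,
      \sum_i Es i = 1,
      forall i j, far i j -> Es i *m A *m Es j = 0
    & forall i j, adj i j -> Es i *m A *m Es j != 0].

Section TridiagonalWalk.
Variables (K : fieldType) (d : nat) (A : 'M[K]_d.+1) (Es : 'I_d.+1 -> 'M[K]_d.+1).
Hypothesis tridiag : irred_tridiagonal A Es.
Local Notation F k := (Es (inord k)).
Local Notation a := (ls_a A Es).
Local Notation x := (ls_x A Es).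

Lemma F_mul k l : (k <= d)%N -> (l <= d)%N -> F k *m F l = (k == l)%:R *: F l.
Proof.
have [mulE _ _ _ _] := tridiag; move=> kd ld.
by rewrite mulE -val_eqE /= !inordK.
Qed.

Lemma F_idem k : F k *m F k = F k.
Proof. by have [mulE _ _ _ _] := tridiag; rewrite mulE eqxx scale1r. Qed.

Lemma F_sandwich k Y : F k *m Y *m F k = \tr (F k *m Y) *: F k.
Proof. by have [_ rankE _ _ _] := tridiag; apply: rank1_mulmx_sandwich. Qed.

Lemma F_far k l : (k <= d)%N -> (l <= d)%N -> (k.+1 < l)%N || (l.+1 < k)%N ->
  F k *m A *m F l = 0.
Proof. by have [_ _ _ farE _] := tridiag; move=> kd ld kl; rewrite farE // /far !inordK. Qed.

Lemma A_mul_F k : (k < d)%N -> A *m F k = \sum_(k.-1 <= l < k.+2) F l *m A *m F k.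
Proof.
have [_ _ sumE _ _] := tridiag; move=> kd.
rewrite -{1}[A]mul1r -sumE -mulmxE big_mknat !mulmx_suml.
rewrite (big_cat_nat (n := k.-1)) //=; last by lia.
rewrite (big_cat_nat (n := k.+2) (m := k.-1)) //=; last by lia.
rewrite big1_seq ?add0r; last first.
  by move=> l; rewrite mem_index_iota => /andP [_ lk]; rewrite F_far //; lia.
rewrite [X in _ + X]big1_seq ?addr0 // => l; rewrite mem_index_iota => /andP [kl ld].
by rewrite F_far //; lia.
Qed.

Fixpoint walk k := if k is k'.+1 then F k *m A *m walk k' else F 0.
Fixpoint rwalk k := if k is k'.+1 then rwalk k' *m A *m F k else F 0.

Lemma F_walk k : F k *m walk k = walk k.
Proof. by case: k => [|k] /=; rewrite ?F_idem // !mulmxA F_idem. Qed.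

Lemma rwalk_F k : rwalk k *m F k = rwalk k.
Proof. by case: k => [|k] /=; rewrite ?F_idem // -!mulmxA F_idem. Qed.

Lemma F_AFA_F k : F k *m (A *m F k.+1 *m A) *m F k = x k.+1 *: F k.
Proof.
by rewrite F_sandwich /ls_x mxtrace_mulC -!mulmxA mxtrace_mulC !mulmxA.
Qed.

Lemma A_mul_walk k : (k < d)%N ->
  A *m walk k = walk k.+1 + a k *: walk k + x k *: (if k is k'.+1 then walk k' else 0).
Proof.
have up l : F l.+1 *m A *m F l *m walk l = walk l.+1 by rewrite -mulmxA F_walk.
have diag l : F l *m A *m F l *m walk l = a l *: walk l.
  by rewrite F_sandwich -scalemxAl F_walk.
have down l : F l *m A *m F l.+1 *m walk l.+1 = x l.+1 *: walk l.
  have -> : F l *m A *m F l.+1 *m walk l.+1 = F l *m (A *m F l.+1 *m A) *m F l *m walk l.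
    by rewrite -mulmxA F_walk /= -{1}F_walk !mulmxA.
  by rewrite F_AFA_F -scalemxAl F_walk.
move=> kd; rewrite -{1}F_walk mulmxA A_mul_F // mulmx_suml.
case: k kd => [|k] kd.
  by rewrite big_ltn // big_nat1 diag up scaler0 addr0 addrC.
rewrite [k.+1.-1]/= big_ltn; last by lia.
by rewrite big_ltn // big_nat1 down diag up addrC (addrC (a k.+1 *: _)).
Qed.

Lemma horner_ls_ppair_walk k : (k <= d)%N ->
  horner_mx A (ls_ppair A Es k).2 *m F 0 = walk k /\
  horner_mx A (ls_ppair A Es k).1 *m F 0 = if k is k'.+1 then walk k' else 0.
Proof.
elim: k => [|k IHk] kd; first by rewrite /= rmorph1 rmorph0 mul1mx mul0mx.
have [IH2 IH1] := IHk (ltnW kd); split; last exact: IH2.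
rewrite [ls_ppair _ _ k.+1]/= rmorphB !rmorphM rmorphB [LHS]/= horner_mx_X !horner_mx_C.
rewrite -!mulmxE mulmxBl -!mulmxA IH2 IH1 mulmxBl !mul_scalar_mx A_mul_walk //.
by rewrite addrAC addrK addrK.
Qed.

Lemma rwalk_mul_walk i j : (i <= d)%N -> (j <= d)%N ->
  rwalk i *m walk j = ((i == j)%:R * \prod_(1 <= k < i.+1) x k) *: F 0.
Proof.
move=> id jd; have [<-|ij] := eqVneq i j; last first.
  by rewrite -rwalk_F -F_walk mulmxA -(mulmxA _ (F i)) F_mul // (negbTE ij) scale0r
    mulmx0 mul0mx mul0r scale0r.
rewrite mul1r; elim: i id => [|i IHi] id; first by rewrite big_geq // scale1r F_idem.
rewrite big_nat_recr //= -/(x i.+1) mulrC -scalerA -IHi ?(ltnW id) //.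
have -> : rwalk i *m A *m F i.+1 *m (F i.+1 *m A *m walk i) =
    rwalk i *m (F i *m (A *m F i.+1 *m A) *m F i) *m walk i.
  by rewrite -{1}rwalk_F -{1}(F_walk i) !mulmxA -[_ *m F i.+1 *m F i.+1]mulmxA F_idem.
by rewrite F_AFA_F -scalemxAr -scalemxAl rwalk_F.
Qed.

Lemma mxtrace_F0 : \tr (F 0) = 1.
Proof.
have [_ rankE _ _ _] := tridiag.
have F0_neq0 : F 0 != 0 by rewrite -mxrank_eq0 rankE.
have := F_sandwich 0 1%:M; rewrite !mulmx1 F_idem => /eqP.
rewrite -subr_eq0 -{1}[F 0]scale1r -scalerBl scaler_eq0 (negbTE F0_neq0) orbF.
by rewrite subr_eq0 => /eqP <-.
Qed.

Lemma ls_x_neq0 k : (0 < k <= d)%N -> x k != 0.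
Proof.
have [_ _ _ _ adjE] := tridiag.
have adjF l m : (l <= d)%N -> (m <= d)%N -> (l.+1 == m) || (m.+1 == l) ->
    F l *m A *m F m != 0.
  by move=> ld md lm; rewrite adjE // /adj !inordK.
case: k => // k /andP [_ kd].
have U0 : F k.+1 *m A *m F k != 0 by rewrite adjF ?eqxx ?orbT // ltnW.
have V0 : F k *m A *m F k.+1 != 0 by rewrite adjF ?eqxx // ltnW.
(* If x_{k+1} = 0, then U Y V = tr(E*_k Y) x_{k+1} E*_{k+1} vanishes for all Y. *)
have [Y] := exists_mulmx_neq0 U0 V0; apply: contraNneq => x0.
have -> : F k.+1 *m A *m F k *m Y *m (F k *m A *m F k.+1) =
    F k.+1 *m A *m (F k *m Y *m F k) *m A *m F k.+1 by rewrite !mulmxA.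
rewrite F_sandwich -scalemxAr -!scalemxAl.
have -> : F k.+1 *m A *m F k *m A *m F k.+1 = F k.+1 *m (A *m F k *m A) *m F k.+1.
  by rewrite !mulmxA.
by rewrite F_sandwich !mulmxA -[\tr (_ *m A *m _ *m A)]/(x k.+1) x0 !scale0r scaler0.
Qed.

Lemma prod_ls_x_neq0 i : (i <= d)%N -> \prod_(1 <= k < i.+1) x k != 0.
Proof.
move=> id; rewrite prodf_seq_neq0; apply/allP => k.
by rewrite mem_index_iota => /andP [k_gt0 k_le]; rewrite ls_x_neq0 // k_gt0 -ltnS (leq_trans k_le).
Qed.

End TridiagonalWalk.

Lemma trmx_horner_mx (R : comNzRingType) n (A : 'M[R]_n.+1) p :
  (horner_mx A p)^T = horner_mx A^T p.
Proof.
elim/poly_ind: p => [|p c IHp]; first by rewrite !rmorph0 trmx0.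
rewrite !rmorphD !rmorphM /= !horner_mx_X !horner_mx_C linearD /= -!mulmxE trmx_mul IHp.
by rewrite tr_scalar_mx (comm_horner_mx p (erefl (A^T *m A^T))).
Qed.

Lemma irred_tridiagonal_tr (K : fieldType) d (A : 'M[K]_d.+1) Es :
  irred_tridiagonal A Es -> irred_tridiagonal A^T (fun i => (Es i)^T).
Proof.
case=> mulE rankE sumE farE adjE; split=> [i j|i||i j ij|i j ij].
- rewrite -trmx_mul mulE; have [->|ij] := eqVneq j i; first by rewrite linearZ.
  by rewrite !scale0r trmx0.
- by rewrite mxrank_tr.
- by rewrite -(raddf_sum (@trmx _ _ _)) sumE; apply: trmx1.
- by rewrite -!trmx_mul mulmxA farE ?trmx0 // /far orbC.
have ji : adj j i by rewrite /adj orbC.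
rewrite -!trmx_mul mulmxA; apply: contra (adjE j i ji) => /eqP/(congr1 trmx).
by rewrite trmxK trmx0 => ->.
Qed.

Section Transpose.
Variables (K : fieldType) (d : nat) (A : 'M[K]_d.+1) (Es : 'I_d.+1 -> 'M[K]_d.+1).
Local Notation EsT := (fun i => (Es i)^T).

Lemma ls_ppair_tr k : ls_ppair A^T EsT k = ls_ppair A Es k.
Proof.
have a_tr l : ls_a A^T EsT l = ls_a A Es l.
  by rewrite /ls_a -trmx_mul mxtrace_tr mxtrace_mulC.
have x_tr l : ls_x A^T EsT l = ls_x A Es l.
  by case: l => //= l; rewrite -!trmx_mul mxtrace_tr !mulmxA mxtrace_mulC !mulmxA.
by elim: k => //= k ->; rewrite a_tr x_tr.
Qed.

Lemma trmx_walk k : (walk A^T EsT k)^T = rwalk A Es k.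
Proof.
elim: k => [|k IHk] /=; first by rewrite trmxK.
by rewrite !trmx_mul IHk !trmxK mulmxA.
Qed.

End Transpose.

Lemma mxtrace_horner_ls_p (K : fieldType) d (A : 'M[K]_d.+1) Es i j :
    irred_tridiagonal A Es -> (i <= d)%N -> (j <= d)%N ->
  \tr (horner_mx A (ls_p A Es i * ls_p A Es j) *m Es ord0) =
  (i == j)%:R * \prod_(1 <= k < i.+1) ls_x A Es k.
Proof.
move=> tridiag id jd.
have -> : Es ord0 = Es (inord 0) by congr Es; apply: val_inj; rewrite /= inordK.
(* Transposition exchanges [walk] and [rwalk] and preserves a_i and x_i. *)
have left_walk : Es (inord 0) *m horner_mx A (ls_p A Es i) = rwalk A Es i.
  rewrite -[LHS]trmxK trmx_mul trmx_horner_mx /ls_p -(ls_ppair_tr A Es i).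
  by rewrite (horner_ls_ppair_walk (irred_tridiagonal_tr tridiag) id).1 trmx_walk.
have right_walk := (horner_ls_ppair_walk tridiag jd).1.
rewrite rmorphM -mulmxE -[X in _ *m X](F_idem tridiag 0) mulmxA mxtrace_mulC.
rewrite !mulmxA left_walk -mulmxA right_walk rwalk_mul_walk //.
by rewrite mxtraceZ (mxtrace_F0 tridiag) mulr1.
Qed.

Lemma leonard_irred_tridiagonal (K : fieldType) d (A As : 'M[K]_d.+1) E Es :
  leonard_system A As E Es -> irred_tridiagonal A Es.
Proof.
case=> _ [_ [_ [[th [th_inj th_eigen EsE]] [_ [_ [farE adjE]]]]]].
split=> // [i j|i|]; rewrite ?EsE.
- exact: mul_prim_idem.
- exact: rank_prim_idem.
under eq_bigr do rewrite EsE; exact: sum_prim_idem.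
Qed.

Lemma orthogonality_dual (K : fieldType) n (P : 'I_n -> 'I_n -> K) (m X : 'I_n -> K) :
  (forall i, X i != 0) ->
  (forall i j, \sum_r P i r * P j r * m r = (i == j)%:R * X i) ->
  forall r s, \sum_i P i r * P i s / X i = (r == s)%:R * (m r)^-1.
Proof.
move=> X_neq0 orth.
pose U : 'M[K]_n := \matrix_(i, r) (P i r * m r).
pose V : 'M[K]_n := \matrix_(r, j) (P j r / X j).
have UV : U *m V = 1%:M.
  apply/matrixP => i j; rewrite !mxE.
  under eq_bigr do rewrite !mxE mulrAC mulrA mulrAC.
  rewrite -mulr_suml orth; have [->|_] := eqVneq i j; last by rewrite !mul0r.
  by rewrite mul1r divff.
have VU : forall r s, (\sum_i P i r * P i s / X i) * m s = (r == s)%:R.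
  move=> r s; move/matrixP: (mulmx1C UV) => /(_ r s); rewrite !mxE => <-.
  by rewrite mulr_suml; apply: eq_bigr => i _; rewrite !mxE mulrA [P i r / X i * _]mulrAC.
move=> r s; have m_neq0 : m s != 0.
  by apply/eqP => ms0; move: (VU s s); rewrite ms0 mulr0 eqxx => /esym/eqP; rewrite oner_eq0.
apply: (mulIf m_neq0); rewrite VU.
by have [->|_] := eqVneq r s; rewrite ?mul0r // mul1r mulVf.
Qed.

Lemma ls_p_orthogonality (K : fieldType) d (A : 'M[K]_d.+1) Es E th :
    irred_tridiagonal A Es -> injective th -> (forall i, eigenvalue A (th i)) ->
    (forall i, E i = prim_idem A th i) ->
  forall i j : 'I_d.+1,
  \sum_(r < d.+1) (ls_p A Es i).[th r] * (ls_p A Es j).[th r] * ls_m E Es r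
  = (i == j)%:R * \prod_(1 <= k < i.+1) ls_x A Es k.
Proof.
move=> tridiag th_inj th_eigen EE i j.
rewrite -(mxtrace_horner_ls_p tridiag (ltn_ord i) (ltn_ord j)).
rewrite (horner_mx_prim_idem th_inj th_eigen) mulmx_suml raddf_sum.
by apply: eq_bigr => r _; rewrite /= -scalemxAl mxtraceZ hornerM /ls_m EE.
Qed.

Theorem theorem18p4 (K : fieldType) (d : nat) (A As : 'M[K]_d.+1)
  (E Es : 'I_d.+1 -> 'M[K]_d.+1) (th : 'I_d.+1 -> K) :
  leonard_system A As E Es ->
  injective th -> (forall i, eigenvalue A (th i)) ->
  (forall i, E i = prim_idem A th i) ->
  (forall i j : 'I_d.+1,
     \sum_(r < d.+1) (ls_p A Es i).[th r] * (ls_p A Es j).[th r] * ls_m E Es r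
     = (i == j)%:R * \prod_(1 <= k < i.+1) ls_x A Es k) /\
  (forall r s : 'I_d.+1,
     \sum_(i < d.+1) (ls_p A Es i).[th r] * (ls_p A Es i).[th s]
                      / \prod_(1 <= k < i.+1) ls_x A Es k
     = (r == s)%:R * (ls_m E Es r)^-1).
Proof.
move=> leonard th_inj th_eigen EE.
have tridiag := leonard_irred_tridiagonal leonard.
split; first exact: ls_p_orthogonality.
apply: orthogonality_dual (ls_p_orthogonality tridiag th_inj th_eigen EE) => i.
exact: (prod_ls_x_neq0 tridiag (ltn_ord i)).
Qed.
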